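(* For every $n\geq 2$, let $D_n^2$ be the random variable that chooses independently a pair of trees $T,T'\in\mathcal{T}_n$ and computes $d_{\varphi,2}(T,T')^2$. Under the uniform model its expected value is $$E_U(D_n^2)=\frac{1}{3}(4n^3+18n^2-10n)-\frac{n(n+3)}{2}\cdot\frac{(2n-2)!!}{(2n-3)!!}-\frac{n(n+7)}{4}\left(\frac{(2n-2)!!}{(2n-3)!!}\right)^2.$$
   Context: A phylogenetic tree with $n$ leaves is a fully resolved (binary) rooted tree, viewed as a directed graph with arcs pointing away from the root, whose leaves are bijectively labeled by $\{1,\dots,n\}$; $\mathcal{T}_n$ denotes the set of all such trees (up to label-preserving isomorphism); $|\mathcal{T}_n|=(2n-3)!!$. The depth $\delta_T(v)$ of a node is the number of arcs from the root to it. For leaves $i\neq j$, $\varphi_T(i,j)$ is the depth of the lowest common ancestor of $i$ and $j$, and $\varphi_T(i,i)=\delta_T(i)$. The euclidean cophenetic metric is $d_{\varphi,2}(T_1,T_2)=\sqrt{\sum_{1\le i\le j\le n}(\varphi_{T_1}(i,j)-\varphi_{T_2}(i,j))^2}$. The uniform model gives each $T\in\mathcal{T}_n$ probability $1/(2n-3)!!$, and the two trees are chosen independently. Here $(2m-1)!!=(2m-1)(2m-3)\cdots 3\cdot 1$ and $(2m)!!=(2m)(2m-2)\cdots 2$, with $0!!=1$. *)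

From mathcomp Require Import all_boot all_order all_algebra.
Set Implicit Arguments. Unset Strict Implicit. Unset Printing Implicit Defensive.
Import Order.TTheory GRing.Theory Num.Theory.

Inductive tree : Type := Leaf of nat | Node of tree & tree.

Fixpoint leaves (T : tree) : seq nat :=
  match T with Leaf a => [:: a] | Node l r => leaves l ++ leaves r end.

(* T is a (planar representative of a) phylogenetic tree on {1,..,n}:
   its leaves are bijectively labelled by 1..n. *)
Definition phylo (n : nat) (T : tree) : bool := perm_eq (leaves T) (iota 1 n).

Fixpoint iso (T1 T2 : tree) : bool :=
  match T1, T2 with
  | Leaf a, Leaf b => a == b
  | Node l r, Node l' r' => (iso l l' && iso r r') || (iso l r' && iso r l')
  | _, _ => false
  end.

(* s is a system of representatives of T_n (isomorphism classes) *)
Definition representatives (n : nat) (s : seq tree) : Prop :=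
  [/\ all (phylo n) s,
      (forall T, phylo n T -> has (iso T) s) &
      pairwise (fun a b => ~~ iso a b) s].

(* phi_T(i,j): depth of the lowest common ancestor of leaves i and j
   (for i = j this is the depth of leaf i). *)
Fixpoint phi (T : tree) (i j : nat) : nat :=
  match T with
  | Leaf _ => 0
  | Node l r =>
      if (i \in leaves l) && (j \in leaves l) then (phi l i j).+1
      else if (i \in leaves r) && (j \in leaves r) then (phi r i j).+1
      else 0
  end.

Definition coph_dist2 (n : nat) (T1 T2 : tree) : rat :=
  (\sum_(1 <= i < n.+1) \sum_(i <= j < n.+1)
     ((phi T1 i j)%:R - (phi T2 i j)%:R) ^+ 2)%R.

Fixpoint dfact (m : nat) : nat :=
  match m with
  | 0 => 1
  | 1 => 1
  | (k.+2) as m' => m' * dfact k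
  end.

Definition EU_D2 (n : nat) (s : seq tree) : rat :=
  ((size s)%:R ^+ 2)^-1 * \sum_(T1 <- s) \sum_(T2 <- s) coph_dist2 n T1 T2.

From HB Require Import structures.
From mathcomp Require Import all_boot all_order all_algebra.
From mathcomp Require Import zify ring.
Import Order.TTheory GRing.Theory Num.Theory.
Set Implicit Arguments. Unset Strict Implicit. Unset Printing Implicit Defensive.

(* A tree with leaves a :: rl arises, up to isomorphism, exactly once by grafting the
   labels of rl one at a time, starting from the single leaf a, either above the root or
   on an arc of the tree built so far; a tree with k leaves offers 2k - 1 positions, so
   there are (2n-3)!! trees on n leaves.  Grafting a new leaf raises phi(i,j) by one at
   the phi(i,j) + 1 positions on the path from above the root down to the lowest common
   ancestor of i and j, and leaves it unchanged elsewhere.  This gives linear recurrences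
   for the sums of phi(i,j) and phi(i,j)^2 over all trees, solved in closed form in terms
   of (2n-2)!! and (2n-3)!!.  Since sum_{x,y} (x - y)^2 = 2 (N sum x^2 - (sum x)^2), the
   expectation follows by adding up the n diagonal and n(n-1)/2 off-diagonal pairs. *)

Lemma perm_cons_swap (T : eqType) (x y : T) s : perm_eq (x :: y :: s) (y :: x :: s).
Proof. by rewrite -[x :: _]cat1s -[y :: s]cat1s -[y :: x :: s]cat1s perm_catCA. Qed.

Lemma perm_cat_filter_notin (T : eqType) (u t : seq T) :
  uniq u -> uniq t -> {subset u <= t} ->
  perm_eq (u ++ [seq x <- t | x \notin u]) t.
Proof.
move=> uu ut ut_sub; apply: perm_trans (permEl (perm_filterC (mem u) t)).
apply: perm_cat => //; apply: uniq_perm => //; first exact: filter_uniq.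
by move=> x; rewrite mem_filter andb_idr //; apply: ut_sub.
Qed.

Lemma count_le1_pairwise (T : eqType) (P : pred T) (s : seq T) :
  pairwise (fun x y => ~~ (P x && P y)) s -> (count P s <= 1)%N.
Proof.
elim: s => [//|x s IH]; rewrite pairwise_cons /= => /andP[hx hs].
case Px: (P x); last by rewrite IH.
suff -> : count P s = 0%N by [].
by apply/eqP; rewrite -leqn0 leqNgt -has_count; apply/hasPn => y /(allP hx); rewrite Px.
Qed.

Lemma dfactSS m : dfact m.+2 = m.+2 * dfact m.
Proof. by []. Qed.

Lemma dfact_gt0 m : (0 < dfact m)%N.
Proof. by elim/ltn_ind: m => [[|[|m]]] // IH; rewrite dfactSS muln_gt0 IH. Qed.

Lemma dfact_odd_succ k : (0 < k)%N ->
  dfact (2 * k.+1 - 3) = (2 * k - 1) * dfact (2 * k - 3).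
Proof.
case: k => [|[|k]] // _; have -> : (2 * k.+3 - 3 = (2 * k.+2 - 3).+2)%N by lia.
by rewrite dfactSS; congr (_ * _); lia.
Qed.

Lemma dfact_even_succ k : (0 < k)%N ->
  dfact (2 * k.+1 - 2) = (2 * k) * dfact (2 * k - 2).
Proof.
case: k => // k _; have -> : (2 * k.+2 - 2 = (2 * k.+1 - 2).+2)%N by lia.
by rewrite dfactSS; congr (_ * _); lia.
Qed.

Lemma sum_nat_triangle n : (\sum_(1 <= i < n.+1) (n - i) = 'C(n, 2))%N.
Proof.
elim: n => [|n IH]; first by rewrite big_geq.
by rewrite big_nat_recl // subn1 /= binS bin1 -IH addnC.
Qed.

Section RingSums.
Local Open Scope ring_scope.

Lemma sumr_const_seq (V : nmodType) (I : Type) (s : seq I) (x : V) :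
  \sum_(i <- s) x = x *+ size s.
Proof. by rewrite big_const_seq count_predT iter_addr_0. Qed.

Lemma sum_sqr_diff (R : comRingType) (I : Type) (s : seq I) (g : I -> R) :
  \sum_(x <- s) \sum_(y <- s) (g x - g y) ^+ 2 =
  2 * ((size s)%:R * \sum_(x <- s) g x ^+ 2 - (\sum_(x <- s) g x) ^+ 2).
Proof.
under eq_bigr => x _.
  rewrite (eq_bigr (fun y => g x ^+ 2 - 2 * g x * g y + g y ^+ 2)) => [|y _]; last by ring.
  rewrite big_split sumrB /= sumr_const_seq -mulr_sumr -[_ *+ size s]mulr_natl.
  over.
rewrite big_split sumrB /= sumr_const_seq -mulr_suml -!mulr_sumr -[_ *+ size s]mulr_natl.
by ring.
Qed.

Lemma sum_upper_triangle (V : nmodType) n (F : nat -> nat -> V) d o :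
  (forall i, (1 <= i <= n)%N -> F i i = d) ->
  (forall i j, (1 <= i)%N -> (i < j <= n)%N -> F i j = o) ->
  \sum_(1 <= i < n.+1) \sum_(i <= j < n.+1) F i j = d *+ n + o *+ 'C(n, 2).
Proof.
move=> Fd Fo; transitivity (\sum_(1 <= i < n.+1) (d + o *+ (n - i))).
  apply: eq_big_nat => i /andP[i1 iN]; rewrite big_ltn // Fd ?i1 //; congr (_ + _).
  by rewrite -subSS -sumr_const_nat; apply: eq_big_nat => j /andP[ij jN]; apply: Fo; lia.
by rewrite big_split sumr_const_nat sumrMnr sum_nat_triangle subn1.
Qed.

Lemma natr_bin2 (R : numFieldType) n : ('C(n, 2))%:R = n%:R * (n%:R - 1) / 2 :> R.
Proof.
have h : ('C(n, 2) * 2 = n * n.-1)%N.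
  by elim: n => [//|n IH]; rewrite binS bin1 mulnDl IH; case: n {IH} => //= n; nia.
have two_neq0 : (2 : R) != 0 by rewrite pnatr_eq0.
apply: (mulIf two_neq0); rewrite mulfVK // -natrM h natrM.
by case: n {h} => [|n]; rewrite ?mul0r //= -natr1 addrK.
Qed.

Lemma exchange_pair_sums (R : nmodType) (I : Type) (s : seq I) n
    (F : I -> I -> nat -> nat -> R) :
  \sum_(x <- s) \sum_(y <- s) \sum_(1 <= i < n.+1) \sum_(i <= j < n.+1) F x y i j =
  \sum_(1 <= i < n.+1) \sum_(i <= j < n.+1) \sum_(x <- s) \sum_(y <- s) F x y i j.
Proof.
under eq_bigr => x _ do rewrite exchange_big.
under eq_bigr => x _ do under eq_bigr => i _ do rewrite exchange_big.
by rewrite exchange_big; apply: eq_bigr => i _; rewrite exchange_big.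
Qed.

End RingSums.

(** * Trees up to isomorphism *)

Fixpoint tree_eqb (a b : tree) : bool :=
  match a, b with
  | Leaf x, Leaf y => x == y
  | Node l r, Node l' r' => tree_eqb l l' && tree_eqb r r'
  | _, _ => false
  end.

Lemma tree_eqP : Equality.axiom tree_eqb.
Proof.
elim=> [x|l IHl r IHr] [y|l' r'] /=; try by constructor.
- by apply: (iffP eqP) => [->|[]].
- apply: (iffP andP) => [[/IHl -> /IHr ->]//|[<- <-]].
  by split; [apply/IHl|apply/IHr].
Qed.

HB.instance Definition _ := hasDecEq.Build tree tree_eqP.

Lemma leaves_nil T : leaves T != [::].
Proof. by elim: T => [a|l IHl r IHr] //=; case: (leaves l) IHl. Qed.

Lemma size_leaves_Node l r : (2 <= size (leaves (Node l r)))%N.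
Proof.
rewrite /= size_cat.
case: (leaves l) (leaves_nil l) => // x s _.
by case: (leaves r) (leaves_nil r) => //= y t _; rewrite addnS.
Qed.

Lemma iso_sym T1 T2 : iso T1 T2 -> iso T2 T1.
Proof.
elim: T1 T2 => [a|l IHl r IHr] [b|l' r'] //=; first by move/eqP->.
by case/orP=> /andP[h1 h2]; apply/orP; [left|right]; rewrite IHl ?IHr.
Qed.

Lemma iso_trans T2 T1 T3 : iso T1 T2 -> iso T2 T3 -> iso T1 T3.
Proof.
elim: T1 T2 T3 => [a|l IHl r IHr] [b|l2 r2] [c|l3 r3] //=; first by move=> /eqP-> /eqP->.
case/orP=> /andP[h1 h2]; case/orP=> /andP[h3 h4]; apply/orP.
- by left; rewrite (IHl _ _ h1 h3) (IHr _ _ h2 h4).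
- by right; rewrite (IHl _ _ h1 h3) (IHr _ _ h2 h4).
- by right; rewrite (IHl _ _ h1 h4) (IHr _ _ h2 h3).
- by left; rewrite (IHl _ _ h1 h4) (IHr _ _ h2 h3).
Qed.

Lemma iso_Node l r l' r' :
  iso (Node l r) (Node l' r') = (iso l l' && iso r r') || (iso l r' && iso r l').
Proof. by []. Qed.

Lemma iso_Leaf a T : iso (Leaf a) T -> T = Leaf a.
Proof. by case: T => [b|? ?] //= /eqP->. Qed.

Lemma perm_leaves_iso T1 T2 : iso T1 T2 -> perm_eq (leaves T1) (leaves T2).
Proof.
elim: T1 T2 => [a|l IHl r IHr] [b|l2 r2] //=; first by move/eqP->.
case/orP=> /andP[h1 h2]; first exact: perm_cat (IHl _ h1) (IHr _ h2).
by rewrite perm_catC; apply: perm_cat; [apply: IHr|apply: IHl].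
Qed.

Lemma mem_leaves_iso T1 T2 x : iso T1 T2 -> (x \in leaves T1) = (x \in leaves T2).
Proof. by move/perm_leaves_iso/perm_mem. Qed.

Lemma disjoint_leaves l r x :
  uniq (leaves (Node l r)) -> x \in leaves l -> x \in leaves r = false.
Proof.
rewrite /= cat_uniq => /and3P[_ /hasPn dis _] xl.
by apply/negP => /dis; rewrite xl.
Qed.

Lemma phi_iso T1 T2 i j :
  uniq (leaves T1) -> iso T1 T2 -> phi T1 i j = phi T2 i j.
Proof.
elim: T1 T2 => [a|l IHl r IHr] [b|l2 r2] //= u.
have /andP[ul ur] : uniq (leaves l) && uniq (leaves r).
  by move: u; rewrite /= cat_uniq => /and3P[-> _ ->].
case/orP=> /andP[h1 h2]; rewrite -!(mem_leaves_iso _ h1) -!(mem_leaves_iso _ h2).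
  by rewrite (IHl _ ul h1) (IHr _ ur h2).
rewrite (IHl _ ul h1) (IHr _ ur h2).
have [il|//] := boolP (i \in leaves l); have [jl|//] := boolP (j \in leaves l).
by rewrite /= (disjoint_leaves u il).
Qed.

Lemma phylo_uniq n T : phylo n T -> uniq (leaves T).
Proof. by move/perm_uniq => ->; apply: iota_uniq. Qed.

(** * Growing trees leaf by leaf *)

Fixpoint insert_leaf (T : tree) (m : nat) : seq tree :=
  Node T (Leaf m) ::
    if T is Node l r then
      [seq Node l' r | l' <- insert_leaf l m] ++ [seq Node l r' | r' <- insert_leaf r m]
    else [::].

Fixpoint remove_leaf (T : tree) (m : nat) : tree :=
  if T is Node l r then
    if l == Leaf m then r else if r == Leaf m then l
    else if m \in leaves l then Node (remove_leaf l m) r else Node l (remove_leaf r m)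
  else T.

Lemma mem_insert_leaf T m T' :
  T' \in insert_leaf T m =
  (T' == Node T (Leaf m)) ||
  if T is Node l r then
    (T' \in [seq Node l' r | l' <- insert_leaf l m]) ||
    (T' \in [seq Node l r' | r' <- insert_leaf r m])
  else false.
Proof. by case: T => [a|l r]; rewrite in_cons ?mem_cat ?in_nil. Qed.

Lemma insert_leaf_Node T m T' : T' \in insert_leaf T m -> exists l r, T' = Node l r.
Proof.
rewrite mem_insert_leaf => /orP[/eqP->|]; first by do 2 eexists.
by case: T => // l r /orP[] /mapP[x _ ->]; do 2 eexists.
Qed.

Lemma insert_leaf_neq_Leaf T m a T' : T' \in insert_leaf T m -> T' != Leaf a.
Proof. by case/insert_leaf_Node=> l [r ->]. Qed.

Lemma perm_leaves_insert_leaf T m T' :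
  T' \in insert_leaf T m -> perm_eq (leaves T') (m :: leaves T).
Proof.
elim: T T' => [a|l IHl r IHr] T'; rewrite mem_insert_leaf.
  by case/orP=> // /eqP-> /=; rewrite perm_sym (perm_catC [:: m]).
case/orP=> [/eqP-> /=|/orP[] /mapP[x xin ->] /=].
- by rewrite perm_sym -cat1s perm_catC.
- by rewrite -cat_cons; apply: perm_cat => //; exact: IHl.
- apply: perm_trans (perm_cat (perm_refl _) (IHr x xin)) _.
  by rewrite -[m :: leaves r]cat1s -[m :: (leaves l ++ leaves r)]cat1s perm_catCA.
Qed.

Lemma mem_leaves_insert_leaf T m T' x :
  T' \in insert_leaf T m -> x != m -> (x \in leaves T') = (x \in leaves T).
Proof. by move/perm_leaves_insert_leaf/perm_mem => -> xm; rewrite inE (negbTE xm). Qed.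

Lemma size_insert_leaf T m : (size (insert_leaf T m)).+1 = 2 * size (leaves T).
Proof.
elim: T => [a|l IHl r IHr] //=.
by rewrite size_cat !size_map size_cat; lia.
Qed.

Lemma perm_leaves_remove_leaf T m : m \in leaves T -> T != Leaf m ->
  perm_eq (m :: leaves (remove_leaf T m)) (leaves T).
Proof.
elim: T => [a|l IHl r IHr] /=; first by rewrite inE => /eqP->; rewrite eqxx.
move=> mT _.
have [->|lm] := eqVneq l (Leaf m); first by [].
have [->|rm] := eqVneq r (Leaf m).
  by rewrite /= -[m :: leaves l]cat1s perm_catC.
have [ml|ml] := boolP (m \in leaves l) => /=.
  by rewrite -cat_cons; apply: perm_cat => //; exact: IHl.
have mr : m \in leaves r by move: mT; rewrite mem_cat (negbTE ml).
apply: perm_trans _ (perm_cat (perm_refl _) (IHr mr rm)).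
by rewrite -[m :: leaves (remove_leaf r m)]cat1s -[m :: (leaves l ++ _)]cat1s perm_catCA.
Qed.

Lemma remove_insert_leaf R m T :
  m \notin leaves R -> T \in insert_leaf R m -> remove_leaf T m = R.
Proof.
have neq_Leaf S : m \notin leaves S -> (S == Leaf m) = false.
  by apply: contraNF => /eqP->; rewrite inE.
elim: R T => [a|l IHl r IHr] T mR; rewrite mem_insert_leaf.
  by case/orP=> // /eqP-> /=; rewrite neq_Leaf ?eqxx.
move: (mR); rewrite /= mem_cat negb_or => /andP[ml mr].
case/orP=> [/eqP-> /=|/orP[] /mapP[x xin ->] /=]; first by rewrite eqxx.
- rewrite (negbTE (insert_leaf_neq_Leaf _ xin)) neq_Leaf //.
  by rewrite (perm_mem (perm_leaves_insert_leaf xin)) mem_head (IHl _ ml xin).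
- rewrite neq_Leaf // (negbTE (insert_leaf_neq_Leaf _ xin)) (negbTE ml).
  by rewrite (IHr _ mr xin).
Qed.

Lemma iso_remove_leaf T1 T2 m : uniq (leaves T1) -> m \in leaves T1 -> T1 != Leaf m ->
  iso T1 T2 -> iso (remove_leaf T1 m) (remove_leaf T2 m).
Proof.
elim: T1 T2 => [a|l IHl r IHr] [b|l2 r2] //= u.
have /andP[ul ur] : uniq (leaves l) && uniq (leaves r).
  by move: u; rewrite /= cat_uniq => /and3P[-> _ ->].
rewrite mem_cat => mlr _.
have eq_Leaf S1 S2 : iso S1 S2 -> (S1 == Leaf m) = (S2 == Leaf m).
  by case: S1 S2 => [?|? ?] [?|? ?] //= /eqP->.
case/orP=> /andP[h1 h2].
- rewrite -(eq_Leaf _ _ h1) -(eq_Leaf _ _ h2) -(mem_leaves_iso m h1).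
  case: ifP => // lm; case: ifP => // rm; case: ifP => ml /=.
    by rewrite IHl ?lm // h2.
  by rewrite IHr ?rm ?h1 //; move: mlr; rewrite ml.
- rewrite -(eq_Leaf _ _ h1) -(eq_Leaf _ _ h2) -(mem_leaves_iso m h2).
  have [lm|lm] := eqVneq l (Leaf m).
    have [rm|//] := eqVneq r (Leaf m).
    by move: u; rewrite lm rm /= inE eqxx.
  have [//|rm] := eqVneq r (Leaf m).
  have [ml|ml] /= := boolP (m \in leaves l).
    by rewrite (disjoint_leaves u ml) IHl // h2 orbT.
  have mr : m \in leaves r by move: mlr; rewrite (negbTE ml).
  by rewrite mr /= IHr // h1 orbT.
Qed.

Lemma iso_insert_leaf T m R : m \in leaves T -> T != Leaf m -> iso (remove_leaf T m) R ->
  exists2 T', T' \in insert_leaf R m & iso T T'.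
Proof.
elim: T R => [a|l IHl r IHr] R /=; first by rewrite inE => /eqP->; rewrite eqxx.
rewrite mem_cat => mlr _.
have head_in : Node R (Leaf m) \in insert_leaf R m by rewrite mem_insert_leaf eqxx.
have [->|lm] := eqVneq l (Leaf m).
  by move=> h; exists (Node R (Leaf m)); rewrite //= eqxx h orbT.
have [->|rm] := eqVneq r (Leaf m).
  by move=> h; exists (Node R (Leaf m)); rewrite //= eqxx h.
have inl R1 R2 x : x \in insert_leaf R1 m -> Node x R2 \in insert_leaf (Node R1 R2) m.
  by move=> xin; rewrite mem_insert_leaf /= map_f ?orbT.
have inr R1 R2 x : x \in insert_leaf R2 m -> Node R1 x \in insert_leaf (Node R1 R2) m.
  by move=> xin; rewrite mem_insert_leaf /= map_f ?orbT.
have [ml|ml] := boolP (m \in leaves l); case: R {head_in} => [//|R1 R2] /=.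
  case/orP=> /andP[h1 h2]; have [l' l'in il'] := IHl _ ml lm h1.
    by exists (Node l' R2); rewrite ?inl //= il' h2.
  by exists (Node R1 l'); rewrite ?inr //= il' h2 orbT.
have mr : m \in leaves r by move: mlr; rewrite (negbTE ml).
case/orP=> /andP[h1 h2]; have [r' r'in ir'] := IHr _ mr rm h2.
  by exists (Node R1 r'); rewrite ?inr //= ir' h1.
by exists (Node r' R2); rewrite ?inl //= ir' h1 orbT.
Qed.

Lemma pairwise_insert_leaf R m :
  uniq (m :: leaves R) -> pairwise (fun x y => ~~ iso x y) (insert_leaf R m).
Proof.
elim: R => [//|l IHl r IHr].
rewrite [insert_leaf _ _]/= pairwise_cons pairwise_cat.
rewrite [uniq _]/= cat_uniq mem_cat negb_or => /andP[/andP[ml mr] /and3P[ul dis ur]].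
have m_in x t : x \in insert_leaf t m -> m \in leaves x.
  by move/perm_leaves_insert_leaf/perm_mem => ->; rewrite mem_head.
have not_Leaf_iso x t : x \in insert_leaf t m -> iso (Leaf m) x = false.
  by case/insert_leaf_Node=> ? [? ->].
apply/and4P; split.
- apply/allP=> x; rewrite mem_cat => /orP[] /mapP[y yin ->]; rewrite iso_Node.
  + rewrite (not_Leaf_iso _ _ yin) andbF orbF; apply/negP => /andP[_ /iso_Leaf rm].
    by move: mr; rewrite rm mem_head.
  + rewrite (not_Leaf_iso _ _ yin) andbF /=; apply/negP => /andP[_ /iso_Leaf lm].
    by move: ml; rewrite lm mem_head.
- apply/allrelP => x y /mapP[x' x'in ->] /mapP[y' y'in ->]; rewrite iso_Node.
  apply/negP => /orP[]/andP[h1 h2].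
  + by move: (m_in _ _ x'in); rewrite (mem_leaves_iso _ h1) (negbTE ml).
  + have [z zr] : exists z, z \in leaves r.
      by case: (leaves r) (leaves_nil r) => // z ? _; exists z; rewrite mem_head.
    by move/hasPn: dis => /(_ z zr); rewrite -(mem_leaves_iso z h2) zr.
- rewrite pairwise_map.
  apply: (sub_in_pairwise (P := mem (insert_leaf l m))) (IHl _) => //; last by rewrite /= ml.
  move=> x y xin _ /=; apply: contra => /orP[/andP[]//|/andP[h1 _]].
  by have := m_in _ _ xin; rewrite (mem_leaves_iso _ h1) (negbTE mr).
- rewrite pairwise_map.
  apply: (sub_in_pairwise (P := mem (insert_leaf r m))) (IHr _) => //; last by rewrite /= mr.
  move=> x y _ yin /=; apply: contra => /orP[/andP[]//|/andP[h1 _]].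
  by have := m_in _ _ yin; rewrite -(mem_leaves_iso _ h1) (negbTE ml).
Qed.

Fixpoint enum_trees (a : nat) (rl : seq nat) : seq tree :=
  if rl is m :: rl' then flatten [seq insert_leaf T m | T <- enum_trees a rl']
  else [:: Leaf a].

Lemma perm_leaves_enum_trees a rl T :
  T \in enum_trees a rl -> perm_eq (leaves T) (a :: rl).
Proof.
elim: rl T => [|m rl IH] T /=; first by rewrite inE => /eqP->.
case/flatten_mapP=> R Rin Tin; apply: perm_trans (perm_leaves_insert_leaf Tin) _.
by apply: perm_trans (perm_cons_swap _ _ _); rewrite perm_cons IH.
Qed.

Lemma enum_trees_cover a rl T : perm_eq (leaves T) (a :: rl) ->
  exists2 T', T' \in enum_trees a rl & iso T T'.
Proof.
elim: rl T => [|m rl IH] T /=.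
  case: T => [b|l r] hp; last by have := size_leaves_Node l r; rewrite (perm_size hp).
  exists (Leaf a); first exact: mem_head.
  by move/perm_mem: hp => /(_ b); rewrite !inE eqxx => /esym.
move=> hp.
have mT : m \in leaves T by rewrite (perm_mem hp) !inE eqxx orbT.
have Tm : T != Leaf m by apply: contraTneq hp => ->; apply/negP => /perm_size.
have hd : perm_eq (leaves (remove_leaf T m)) (a :: rl).
  rewrite -(perm_cons m); apply: perm_trans (perm_leaves_remove_leaf mT Tm) _.
  exact: perm_trans hp (perm_cons_swap _ _ _).
have [R Rin iR] := IH _ hd; have [T' T'in iT'] := iso_insert_leaf mT Tm iR.
by exists T' => //; apply/flatten_mapP; exists R.
Qed.

Lemma pairwise_enum_trees a rl :
  uniq (a :: rl) -> pairwise (fun x y => ~~ iso x y) (enum_trees a rl).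
Proof.
elim: rl => [//|m rl IH] /= /andP[]; rewrite inE negb_or => /andP[am a_rl] /andP[m_rl urs].
have u : uniq (a :: rl) by rewrite /= a_rl urs.
have fresh R : R \in enum_trees a rl -> uniq (m :: leaves R).
  move/perm_leaves_enum_trees => hR.
  by rewrite /= (perm_mem hR) (perm_uniq hR) inE negb_or eq_sym am m_rl u.
elim: (enum_trees a rl) (IH u) fresh => [//|R s IHs] /= /andP[allR ps] hfresh.
rewrite pairwise_cat; apply/and3P; split.
- apply/allrelP => x y xin /flatten_mapP[R' R'in yin].
  have /andP[mR uR] := hfresh R (mem_head _ _).
  have /andP[mR' _] := hfresh R' (@mem_behead _ (R :: s) _ R'in).
  apply/negP => ixy.
  have ux : uniq (leaves x) by rewrite (perm_uniq (perm_leaves_insert_leaf xin)) /= mR.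
  have mx : m \in leaves x by rewrite (perm_mem (perm_leaves_insert_leaf xin)) mem_head.
  have := iso_remove_leaf ux mx (insert_leaf_neq_Leaf _ xin) ixy.
  rewrite (remove_insert_leaf mR xin) (remove_insert_leaf mR' yin) => iRR.
  by move/allP: allR => /(_ R' R'in); rewrite iRR.
- exact/pairwise_insert_leaf/hfresh/mem_head.
- by apply: IHs => // R' R'in; apply: hfresh (@mem_behead _ (R :: s) _ R'in).
Qed.

Lemma size_enum_trees a rl : size (enum_trees a rl) = dfact (2 * (size rl).+1 - 3).
Proof.
elim: rl => [//|m rl IH] /=.
rewrite dfact_odd_succ // -IH size_flatten /shape -map_comp sumnE big_map.
rewrite (eq_big_seq (fun=> 2 * (size rl).+1 - 1)%N) ?big_const_seq ?count_predT ?iter_addn_0 //.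
move=> R /perm_leaves_enum_trees/perm_size /= hR.
by have := size_insert_leaf R m; rewrite hR; lia.
Qed.

Lemma enum_trees_representatives n a rl :
  perm_eq (a :: rl) (iota 1 n) -> representatives n (enum_trees a rl).
Proof.
move=> hp; split.
- by apply/allP => T /perm_leaves_enum_trees hT; exact: perm_trans hT hp.
- move=> T pT; have hT : perm_eq (leaves T) (a :: rl) by rewrite (perm_trans pT) // perm_sym.
  by have [T' T'in iT] := enum_trees_cover hT; apply/hasP; exists T'.
- by apply: pairwise_enum_trees; rewrite (perm_uniq hp) iota_uniq.
Qed.

Lemma enum_trees_iota n : (0 < n)%N -> representatives n (enum_trees 1 (iota 2 n.-1)).
Proof. by case: n => // n _; apply: enum_trees_representatives. Qed.

Local Open Scope ring_scope.

Lemma count_iso_representatives n s T :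
  representatives n s -> phylo n T -> count (iso T) s = 1%N.
Proof.
case=> _ cover dis pT; apply/eqP; rewrite eqn_leq -has_count cover // andbT.
apply: count_le1_pairwise; apply: sub_pairwise dis => x y /=.
by apply: contra => /andP[/iso_sym Tx Ty]; exact: iso_trans Tx Ty.
Qed.

Lemma sum_representatives (V : nmodType) n s s' (f : tree -> V) :
  representatives n s -> representatives n s' ->
  {in phylo n &, forall T1 T2, iso T1 T2 -> f T1 = f T2} ->
  \sum_(T <- s) f T = \sum_(T <- s') f T.
Proof.
move=> rs rs' f_iso; have [all_s _ _] := rs; have [all_s' _ _] := rs'.
have count_sum (t : seq tree) (P : pred tree) (c : V) :
  \sum_(T <- t) (if P T then c else 0) = c *+ count P t.
  by rewrite -big_mkcond big_const_seq iter_addr_0.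
transitivity (\sum_(T <- s) \sum_(T' <- s') if iso T T' then f T' else 0).
  apply: eq_big_seq => T /(allP all_s) pT.
  rewrite (eq_big_seq (fun T' => if iso T T' then f T else 0)).
    by rewrite count_sum (count_iso_representatives rs' pT).
  by move=> T' /(allP all_s') pT'; case: ifP => // /(f_iso _ _ pT pT').
rewrite exchange_big; apply: eq_big_seq => T' /(allP all_s') pT'.
rewrite count_sum -[f T' in RHS]mulr1n -(count_iso_representatives rs pT').
by congr (_ *+ _); apply: eq_count => T; apply/idP/idP => /iso_sym.
Qed.

Lemma size_representatives n s :
  (0 < n)%N -> representatives n s -> size s = dfact (2 * n - 3).
Proof.
move=> n_gt0 rs; rewrite -sum1_size (sum_representatives rs (enum_trees_iota n_gt0)) //.
by rewrite sum1_size size_enum_trees size_iota prednK.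
Qed.

(** * Moments of the cophenetic values *)

Definition phi_moment (p : nat) (s : seq tree) (i j : nat) : rat :=
  \sum_(T <- s) (phi T i j)%:R ^+ p.

Lemma phi_moment_representatives n s s' p i j :
  representatives n s -> representatives n s' ->
  phi_moment p s i j = phi_moment p s' i j.
Proof.
move=> rs rs'; apply: sum_representatives rs rs' _ => T1 T2 pT1 _ iT.
by rewrite (phi_iso _ _ (phylo_uniq pT1) iT).
Qed.

Lemma sum_insert_leaf_phi (V : zmodType) (f : nat -> V) R m i j :
  i \in leaves R -> j \in leaves R -> i != m -> j != m ->
  let d := phi R i j in
  \sum_(T <- insert_leaf R m) f (phi T i j) =
    (f d.+1 - f d) *+ d.+1 + f d *+ size (insert_leaf R m).
Proof.
move=> + + im jm; elim: R f => [a|l IHl r IHr] f.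
  by rewrite !inE => /eqP-> /eqP-> /=; rewrite big_seq1 /= !inE eqxx /= subrK.
move=> iR jR /=; set d := phi (Node l r) i j.
rewrite big_cons big_cat !big_map size_cat !size_map.
have -> : phi (Node (Node l r) (Leaf m)) i j = d.+1 by rewrite [LHS]/= iR jR.
set x := f d.+1; set y := f d; rewrite !mulrS addrACA subrK; congr (_ + _).
set bl := (i \in leaves l) && (j \in leaves l).
have phi_l l' : l' \in insert_leaf l m ->
    phi (Node l' r) i j = if bl then (phi l' i j).+1 else d.
  move=> l'in; rewrite /d /bl /=.
  by rewrite (mem_leaves_insert_leaf l'in im) (mem_leaves_insert_leaf l'in jm); case: ifP.
have phi_r r' : r' \in insert_leaf r m ->
    phi (Node l r') i j = if ~~ bl && (i \in leaves r) && (j \in leaves r)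
                          then (phi r' i j).+1 else d.
  move=> r'in; rewrite /d /bl /=.
  rewrite (mem_leaves_insert_leaf r'in im) (mem_leaves_insert_leaf r'in jm).
  by case: ifP => //; case: ifP.
under eq_big_seq => l' l'in do rewrite phi_l //.
under [X in _ + X = _]eq_big_seq => r' r'in do rewrite phi_r //.
have [/andP[il jl]|nl] /= := boolP bl.
  have dl : d = (phi l i j).+1 by rewrite /d /= il jl.
  by rewrite (IHl (f \o succn)) //= -dl sumr_const_seq mulrnDr addrA.
rewrite sumr_const_seq; move/negbTE: nl; rewrite /bl => nl.
have [/andP[ir jr]|/negbTE nr] := boolP ((i \in leaves r) && (j \in leaves r)).
  have dr : d = (phi r i j).+1 by rewrite /d /= nl ir jr.
  by rewrite (IHr (f \o succn)) //= -dr mulrnDr addrCA.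
by rewrite mulr0n add0r sumr_const_seq mulrnDr.
Qed.

Lemma phi_moments_insert_leaf R m i j :
  i \in leaves R -> j \in leaves R -> i != m -> j != m ->
  let k : rat := (size (leaves R))%:R in let d : rat := (phi R i j)%:R in
  phi_moment 1 (insert_leaf R m) i j = 2 * k * d + 1 /\
  phi_moment 2 (insert_leaf R m) i j = (2 * k + 1) * d ^+ 2 + 3 * d + 1.
Proof.
move=> iR jR im jm k d.
have sz : (size (insert_leaf R m))%:R = 2 * k - 1.
  by rewrite /k -[2]/(2%:R) -natrM -(size_insert_leaf R m) -natr1 addrK.
rewrite /phi_moment !(sum_insert_leaf_phi (fun x => x%:R ^+ _)) //.
by split; rewrite -[(_ - _) *+ _]mulr_natr -[_ ^+ _ *+ _]mulr_natr sz -natr1 -/d; ring.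
Qed.

Lemma phi_moments_enum_trees_cons a m rl i j :
  uniq (a :: m :: rl) -> i \in a :: rl -> j \in a :: rl ->
  let s := enum_trees a rl in let k : rat := (size rl).+1%:R in
  phi_moment 1 (enum_trees a (m :: rl)) i j = 2 * k * phi_moment 1 s i j + (size s)%:R /\
  phi_moment 2 (enum_trees a (m :: rl)) i j =
    (2 * k + 1) * phi_moment 2 s i j + 3 * phi_moment 1 s i j + (size s)%:R.
Proof.
move=> u ia ja s k.
have m_fresh : m \notin a :: rl.
  move: u => /= /andP[]; rewrite inE negb_or => /andP[am _] /andP[mrl _].
  by rewrite inE negb_or eq_sym am mrl.
have im : i != m by apply: contraNneq m_fresh => <-.
have jm : j != m by apply: contraNneq m_fresh => <-.
have step R : R \in s ->
    phi_moment 1 (insert_leaf R m) i j = 2 * k * (phi R i j)%:R + 1 /\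
    phi_moment 2 (insert_leaf R m) i j =
      (2 * k + 1) * (phi R i j)%:R ^+ 2 + 3 * (phi R i j)%:R + 1.
  move/perm_leaves_enum_trees=> hR.
  have sR : size (leaves R) = (size rl).+1 := perm_size hR.
  rewrite /k -sR.
  by apply: phi_moments_insert_leaf; rewrite ?(perm_mem hR).
rewrite /phi_moment /= !big_flatten !big_map; split.
- rewrite (eq_big_seq (fun R => 2 * k * (phi R i j)%:R + 1)); last by move=> R /step[].
  by rewrite big_split /= -mulr_sumr sumr_const_seq.
- rewrite (eq_big_seq (fun R => (2 * k + 1) * (phi R i j)%:R ^+ 2 + 3 * (phi R i j)%:R + 1));
    last by move=> R /step[].
  by rewrite !big_split /= -!mulr_sumr sumr_const_seq.
Qed.

Local Notation dfE n := ((dfact (2 * n - 2))%:R : rat).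
Local Notation dfO n := ((dfact (2 * n - 3))%:R : rat).

(* The recurrence of [phi_moments_enum_trees_cons] preserves these closed forms for all
   alpha and q (whence the coefficient 2 - 2q); the diagonal pairs (i, i) have
   (alpha, q) = (1, -1) and the pairs i < j have (1/2, 1/3). *)
Definition moment_closed_form (alpha q : rat) (n : nat) (m1 m2 : rat) : Prop :=
  m1 = alpha * dfE n - dfO n /\
  m2 = ((2 - 2 * q) * n%:R + q) * dfO n - 3 * alpha * dfE n.

Lemma moment_closed_form_step alpha q n m1 m2 : (0 < n)%N ->
  moment_closed_form alpha q n m1 m2 ->
  moment_closed_form alpha q n.+1
    (2 * n%:R * m1 + dfO n) ((2 * n%:R + 1) * m2 + 3 * m1 + dfO n).
Proof.
move=> n_gt0 [-> ->]; rewrite /moment_closed_form dfact_even_succ // dfact_odd_succ //.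
rewrite [((2 * n - 1) * _)%N%:R]natrM.
have -> : ((2 * n - 1)%N%:R : rat) = 2 * n%:R - 1 by rewrite natrB ?natrM //; lia.
by rewrite !natrM -natr1; split; ring.
Qed.

Lemma phi_moments_enum_trees alpha q a pre base i j :
  uniq (a :: pre ++ base) -> i \in a :: base -> j \in a :: base ->
  let M p rl := phi_moment p (enum_trees a rl) i j in
  moment_closed_form alpha q (size base).+1 (M 1%N base) (M 2%N base) ->
  moment_closed_form alpha q (size (pre ++ base)).+1 (M 1%N (pre ++ base)) (M 2%N (pre ++ base)).
Proof.
move=> + ia ja M; elim: pre => [//|m pre IH] u base_form.
have u' : uniq (a :: pre ++ base).
  by move: u; rewrite /= inE negb_or => /andP[/andP[_ ->] /andP[_ ->]].
have in_cat x : x \in a :: base -> x \in a :: pre ++ base.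
  by rewrite !inE mem_cat => /orP[->|->]; rewrite ?orbT.
rewrite /M cat_cons; have [-> ->] := phi_moments_enum_trees_cons u (in_cat _ ia) (in_cat _ ja).
by rewrite size_enum_trees; apply: moment_closed_form_step => //; apply: IH.
Qed.

Lemma phi_moments_representatives n s i j :
  representatives n s -> (1 <= i)%N -> (i <= j <= n)%N ->
  let alpha : rat := if i == j then 1 else 2^-1 in
  let q : rat := if i == j then -1 else 3^-1 in
  moment_closed_form alpha q n (phi_moment 1 s i j) (phi_moment 2 s i j).
Proof.
move=> rs i_ge1 /andP[ij jn] alpha q.
(* Enumerate from Leaf i, grafting j first when i < j. *)
set base := if i == j then [::] else [:: j].
set pre := [seq x <- iota 1 n | x \notin i :: base].
have j_in : j \in i :: base by rewrite /base; case: eqVneq => [->|_]; rewrite !inE eqxx ?orbT.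
have hp : perm_eq (i :: pre ++ base) (iota 1 n).
  have u : uniq (i :: base) by rewrite /base; case: eqVneq => //= /negbTE; rewrite inE => ->.
  apply: perm_trans (perm_cat_filter_notin u (iota_uniq 1 n) _).
    by rewrite /= perm_cons perm_catC.
  move=> x; rewrite mem_iota inE => /orP[/eqP->|]; first lia.
  by rewrite /base; case: ifP => // _; rewrite inE => /eqP->; lia.
rewrite !(phi_moment_representatives _ i j rs (enum_trees_representatives hp)).
have <- : (size (pre ++ base)).+1 = n by have := perm_size hp; rewrite size_iota.
apply: phi_moments_enum_trees; rewrite ?(perm_uniq hp) ?iota_uniq ?mem_head //.
rewrite /alpha /q /base /phi_moment; case: eqVneq => [<-|ij'] /=.
  by rewrite !big_seq1 /=; split; ring.
rewrite !big_seq1 /= !inE eq_sym (negbTE ij') /=.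
by rewrite eqxx /moment_closed_form /=; split; field.
Qed.

Lemma sum_sqr_diff_phi n s i j : (0 < n)%N -> representatives n s ->
  \sum_(T1 <- s) \sum_(T2 <- s) ((phi T1 i j)%:R - (phi T2 i j)%:R) ^+ 2 =
  2 * (dfO n * phi_moment 2 s i j - phi_moment 1 s i j ^+ 2).
Proof. by move=> n_gt0 rs; rewrite sum_sqr_diff (size_representatives n_gt0 rs). Qed.

Theorem theorem3 (n : nat) (hn : (2 <= n)%N) :
  (exists s, representatives n s) /\
  forall s : seq tree, representatives n s ->
    let r : rat := (dfact (2 * n - 2))%:R / (dfact (2 * n - 3))%:R in
    EU_D2 n s =
      (4 * n%:R ^+ 3 + 18 * n%:R ^+ 2 - 10 * n%:R) / 3
      - (n%:R * (n%:R + 3)) / 2 * r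
      - (n%:R * (n%:R + 7)) / 4 * r ^+ 2.
Proof.
have n_gt0 : (0 < n)%N by apply: ltnW.
split; first by exists (enum_trees 1 (iota 2 n.-1)); apply: enum_trees_iota.
move=> s rs r; set E := dfE n; set O := dfO n.
have O_neq0 : O != 0 by rewrite pnatr_eq0 -lt0n dfact_gt0.
pose pair_sum (alpha q : rat) :=
  2 * (O * (((2 - 2 * q) * n%:R + q) * O - 3 * alpha * E) - (alpha * E - O) ^+ 2).
have pairs i j : (1 <= i)%N -> (i <= j <= n)%N ->
    \sum_(T1 <- s) \sum_(T2 <- s) ((phi T1 i j)%:R - (phi T2 i j)%:R) ^+ 2 =
    if i == j then pair_sum 1 (-1) else pair_sum 2^-1 3^-1.
  move=> i1 ijn; rewrite (sum_sqr_diff_phi i j n_gt0 rs).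
  by have [-> ->] := phi_moments_representatives rs i1 ijn; case: eqP.
rewrite /EU_D2 /coph_dist2 exchange_pair_sums.
rewrite (sum_upper_triangle (d := pair_sum 1 (-1)) (o := pair_sum 2^-1 3^-1)).
- rewrite -2![pair_sum _ _ *+ _]mulr_natl (size_representatives n_gt0 rs) natr_bin2.
  by rewrite /r /pair_sum -/E -/O; field.
- by move=> i /andP[i1 iN]; rewrite pairs ?eqxx ?leqnn.
- by move=> i j i1 /andP[ij jN]; rewrite pairs ?(ltn_eqF ij) // ltnW.
Qed.
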